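(* Let $X$ be a finite set, $G\le S_X$, $Y=\mathrm{Fol}_r(G)$, $F=N_{S_X}(G)$, and consider the action of $F$ on $Y$ given by $(\lambda_x:x\in X/G)f=(\kappa_x:x\in X/G)$ with $\kappa_x=((\lambda_{yg_y^{-1}})^{g_y})^f$, $y=xf^{-1}$. For $f\in F$, let $\bar f$ be the permutation of $X/G$ induced by $f$ (sending $w\in X/G$ to the representative of the orbit $(wf)G$), $\mathrm{Cyc}(\bar f)$ a complete set of cycle representatives of $\bar f$, and $c(\bar f,x)$ the cycle of $\bar f$ containing $x\in\mathrm{Cyc}(\bar f)$. Then there is a one-to-one correspondence between the set $\mathrm{Fix}(Y,f)=\{\Lambda\in Y:\Lambda f=\Lambda\}$ and the tuples $(c_x:x\in\mathrm{Cyc}(\bar f))$, where each $c_x$ is a short directed cycle of $\Gamma_r(G,f)$ with vertices in $\bigcup_{y\in c(\bar f,x)}C_G(G_y)$. Consequently, the number of orbits of $F$ on $Y$ is $$|Y/F|=\frac{1}{|F|}\sum_{f\in F}|\mathrm{Fix}(Y,f)|=\frac{1}{|F|}\sum_{f\in F}\prod_{x\in\mathrm{Cyc}(\bar f)}\gamma_r(G,f,x),$$ where $\gamma_r(G,f,x)$ is the number of short directed cycles of $\Gamma_r(G,f)$ with vertices in $\bigcup_{y\in c(\bar f,x)}C_G(G_y)$.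
   Context: Permutations act on the right ($xf$ is the image of $x$ under $f$; $fg$ means $f$ first, then $g$); $g^f=f^{-1}gf$. For $G\le S_X$, $xG$ is the orbit of $x$, $G_x$ its stabilizer, $X/G$ a fixed complete set of orbit representatives; $C_G(H)$ is the centralizer and $N_{S_X}(G)$ the normalizer. $\mathrm{Fol}_r(G)=\prod_{x\in X/G}C_G(G_x)$ is the set of rack folders, i.e., tuples $(\lambda_x:x\in X/G)$ with $\lambda_x\in C_G(G_x)$. For every $y\in X$ fix $g_y\in G$ with $xg_y=y$, where $x$ is the representative in $X/G$ of the orbit of $y$. The digraph (possibly with loops) $\Gamma_r(G,f)$, for $f\in N_{S_X}(G)$, has vertex set the formally disjoint union of the sets $C_G(G_x)$, $x\in X/G$; for $x,z\in X/G$, $\kappa_x\in C_G(G_x)$ and $\lambda_z\in C_G(G_z)$, there is a directed edge $\lambda_z\to\kappa_x$ if and only if, with $y=xf^{-1}$, we have $z=yg_y^{-1}$ and $\kappa_x=((\lambda_z)^{g_y})^f$. A directed cycle of $\Gamma_r(G,f)$ is short if it intersects every vertex set $C_G(G_x)$ at most once. *)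

From HB Require Import structures.
From mathcomp Require Import all_boot all_order all_algebra all_fingroup.
From mathcomp Require boolp.
Set Implicit Arguments. Unset Strict Implicit. Unset Printing Implicit Defensive.

Local Open Scope group_scope.

(* X is the finite type T; permutations act on the right as in mathcomp:
   (s * t) x = t (s x), and a ^ b = b^-1 * a * b.
   The fixed complete set X/G of orbit representatives is encoded by the
   function rep : T -> T (rep y = the representative of the orbit of y),
   and the chosen elements g_y by g : T -> {perm T}. *)

Definition reps (T : finType) (rep : T -> T) : {set T} := [set rep x | x : T].

Definition CGstab (T : finType) (G : {group {perm T}}) (x : T) : {set {perm T}} :=
  'C_G('C_G[x | 'P]).

(* rack folders Fol_r(G), a tuple indexed by X/G, encoded as a finite function
   that is 1 outside X/G *)
Definition folders (T : finType) (G : {group {perm T}}) (rep : T -> T)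
  : {set {ffun T -> {perm T}}} :=
  [set L : {ffun T -> {perm T}} | [forall x, if x \in reps rep
        then L x \in CGstab G x else L x == 1]].

Definition fol_act (T : finType) (rep : T -> T) (g : T -> {perm T})
  (L : {ffun T -> {perm T}}) (f : {perm T}) : {ffun T -> {perm T}} :=
  [ffun x => if x \in reps rep then
     let y := (f^-1) x in ((L ((g y)^-1 y)) ^ (g y)) ^ f else 1].

Definition fol_fix (T : finType) (G : {group {perm T}}) (rep : T -> T)
  (g : T -> {perm T}) (f : {perm T}) : {set {ffun T -> {perm T}}} :=
  [set L in folders G rep | fol_act rep g L f == L].

Definition fol_orbits (T : finType) (G : {group {perm T}}) (rep : T -> T)
  (g : T -> {perm T}) : {set {set {ffun T -> {perm T}}}} :=
  [set [set fol_act rep g L f | f in 'N(G)] | L in folders G rep].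

Definition fbar (T : finType) (rep : T -> T) (f : {perm T}) : T -> T :=
  fun w => rep (f w).

Definition fcyc (T : finType) (rep : T -> T) (f : {perm T}) (x : T) : {set T} :=
  [set w | fconnect (fbar rep f) x w].

Definition cycle_reps (T : finType) (rep : T -> T) (f : {perm T}) (C : {set T}) :=
  C \subset reps rep /\
  forall w, w \in reps rep -> #|[set x in C | fconnect (fbar rep f) x w]| = 1%N.

(* The digraph Gamma_r(G, f): vertices are pairs (x, kappa) with x in X/G and
   kappa in C_G(G_x) (the formally disjoint union). *)
Definition gvert (T : finType) (G : {group {perm T}}) (rep : T -> T)
  : {set T * {perm T}} :=
  [set v | (v.1 \in reps rep) && (v.2 \in CGstab G v.1)].

Definition gedge (T : finType) (G : {group {perm T}}) (rep : T -> T)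
  (g : T -> {perm T}) (f : {perm T}) : rel (T * {perm T}) :=
  fun u v => [&& u \in gvert G rep, v \in gvert G rep &
     let y := (f^-1) v.1 in (u.1 == (g y)^-1 y) && (v.2 == (u.2 ^ (g y)) ^ f)].

(* A directed cycle (loops allowed, length >= 1) of a digraph E, identified
   with its set of edges: the edges (s_i, s_{i+1 mod k}) of a nonempty
   duplicate-free closed walk s. *)
Definition is_dcycle (V : finType) (E : rel V) (A : {set V * V}) : Prop :=
  exists s : seq V, [/\ s != [::], uniq s, path.cycle E s &
                        A = [set e in zip s (rot 1 s)]].

Definition dcverts (V : finType) (A : {set V * V}) : {set V} := [set e.1 | e in A].

Definition dc_short (T : finType) (A : {set (T * {perm T}) * (T * {perm T})}) :=
  [forall x : T, #|[set v in dcverts A | v.1 == x]| <= 1].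

Definition short_cycles (T : finType) (G : {group {perm T}}) (rep : T -> T)
  (g : T -> {perm T}) (f : {perm T}) (x : T)
  : {set {set (T * {perm T}) * (T * {perm T})}} :=
  [set A | [&& boolp.asbool (is_dcycle (gedge G rep g f) A), dc_short A &
              dcverts A \subset [set v | v.1 \in fcyc rep f x]]].

Definition gamma_r (T : finType) (G : {group {perm T}}) (rep : T -> T)
  (g : T -> {perm T}) (f : {perm T}) (x : T) : nat :=
  #|short_cycles G rep g f x|.

(* tuples (c_x : x in Cyc(fbar)) of such cycles, encoded as finite functions
   that are set0 outside Cyc(fbar) *)
Definition cycle_tuples (T : finType) (G : {group {perm T}}) (rep : T -> T)
  (g : T -> {perm T}) (f : {perm T}) (C : {set T})
  : {set {ffun T -> {set (T * {perm T}) * (T * {perm T})}}} :=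
  [set c : {ffun T -> {set (T * {perm T}) * (T * {perm T})}} | [forall x, if x \in C then c x \in short_cycles G rep g f x
                      else c x == set0]].

From HB Require Import structures.
From mathcomp Require Import all_boot all_order all_algebra all_fingroup.
From mathcomp Require boolp.
Set Implicit Arguments. Unset Strict Implicit. Unset Printing Implicit Defensive.
Local Open Scope group_scope.

(* Burnside's lemma for the action of N(G) on rack folders gives the first
   formula.  For the second, fix f in N(G).  Every vertex of Gamma_r(G,f) has
   exactly one outgoing edge, and the successor map [gsucc] is injective, so
   the directed cycles of Gamma_r(G,f) are exactly the orbits of [gsucc].
   A folder Lambda is fixed by f iff its graph {(w, lambda_w)} is stable under
   [gsucc]; the orbit of (x, lambda_x) is then {(w, lambda_w) : w in c(fbar,x)},
   a short cycle over c(fbar,x).  Conversely, the first coordinates along such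
   a cycle run through c(fbar,x), so a short cycle has exactly one vertex over
   each w in c(fbar,x); a tuple of short cycles therefore reads off a unique
   fixed folder. *)

Lemma mem_zip_fpath (V : eqType) (h : V -> V) x p y e :
  fpath h x (rcons p y) ->
  (e \in zip (x :: p) (rcons p y)) = (e.1 \in x :: p) && (e.2 == h e.1).
Proof.
elim: p x => [|a p IH] x /=.
  rewrite andbT => /eqP <-; case: e => e1 e2; rewrite !inE xpair_eqE /=.
  by case: eqP => // ->.
case/andP=> /eqP <- /IH IHx; rewrite [e \in _]in_cons IHx [e.1 \in _]in_cons.
case: e {IH IHx} => e1 e2 /=; rewrite xpair_eqE !inE.
case: (e1 =P x) => [-> | _] //=.
by case: (e2 == h x); rewrite ?andbF ?orbT.
Qed.

Lemma mem_zip_rot1_fcycle (V : eqType) (h : V -> V) (s : seq V) e :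
  s != [::] -> fcycle h s -> (e \in zip s (rot 1 s)) = (e.1 \in s) && (e.2 == h e.1).
Proof. by case: s => // x p _; rewrite rot1_cons; apply: mem_zip_fpath. Qed.

Section FunctionalDigraph.
Variables (V : finType) (s : V -> V) (D : {set V}).
Hypotheses (s_inj : injective s) (sD : forall v, (s v \in D) = (v \in D)).

Definition frel_in : rel V := fun u v => (u \in D) && (v == s u).
Definition forbit (v : V) : {set V} := [set w | fconnect s v w].
Definition frel_edges (S : {set V}) : {set V * V} := [set (w, s w) | w in S].

Lemma dcverts_frel_edges S : dcverts (frel_edges S) = S.
Proof.
apply/setP => w; apply/imsetP/idP => [[e /imsetP[u uS ->] ->] // | wS].
by exists (w, s w) => //; apply/imsetP; exists w.
Qed.

Lemma forbit_refl v : v \in forbit v.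
Proof. by rewrite inE connect0. Qed.

Lemma forbit_succ v w : w \in forbit v -> s w \in forbit v.
Proof. by rewrite !inE => /connect_trans; apply; apply: fconnect1. Qed.

Lemma forbit_sub v : v \in D -> forbit v \subset D.
Proof.
move=> vD; apply/subsetP => w; rewrite inE => /(closed_connect _) <- //.
by move=> x y /eqP <-; rewrite sD.
Qed.

Lemma forbit_eq v w : w \in forbit v -> forbit w = forbit v.
Proof.
rewrite inE => vw; apply/setP => u; rewrite !inE.
apply/idP/idP => [/(connect_trans vw) // | /(connect_trans _) -> //].
by rewrite fconnect_sym.
Qed.

Lemma mem_frel_edges S e : (e \in frel_edges S) = (e.1 \in S) && (e.2 == s e.1).
Proof.
apply/imsetP/andP => [[w wS ->] // | [e1S /eqP e2]].
by exists e.1; rewrite // -e2 -surjective_pairing.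
Qed.

Lemma is_dcycle_frel_in A :
  is_dcycle frel_in A <-> exists2 v, v \in D & A = frel_edges (forbit v).
Proof.
split=> [[[|x p] [// _ _ cp ->]] | [v vD ->]].
  have xD : x \in D by move: cp; case: p => [|y p] /= /andP[/andP[] //].
  have fcp : fcycle s (x :: p).
    by apply: sub_cycle cp => u w /andP[_ /eqP ->] /=.
  exists x => //; apply/setP => e.
  rewrite in_set (mem_zip_rot1_fcycle _ _ fcp) // mem_frel_edges in_set.
  by rewrite (fconnect_cycle fcp (mem_head x p)).
have orbit_n0 : fingraph.orbit s v != [::].
  by case: (fingraph.orbit s v) (fingraph.in_orbit s v).
exists (fingraph.orbit s v); split => //.
- apply: (sub_in_cycle (P := [in D])); last exact: cycle_orbit.
    by move=> x y xD _ /eqP <-; rewrite /frel_in xD eqxx.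
  apply/allP => w; rewrite -fconnect_orbit => vw.
  by apply: (subsetP (forbit_sub vD)); rewrite inE.
- apply/setP => e; rewrite inE (mem_zip_rot1_fcycle _ _ (cycle_orbit s_inj v)) //.
  by rewrite mem_frel_edges inE fconnect_orbit.
Qed.

End FunctionalDigraph.

Lemma CGstabJ (T : finType) (G : {group {perm T}}) p z :
  p \in 'N(G) -> CGstab G (p z) = CGstab G z :^ p.
Proof.
move=> nGp; rewrite /CGstab conjIg -centJ (normP nGp).
by rewrite conjIg (normP nGp) -astab1_act.
Qed.

Lemma CGstab_conj_eq (T : finType) (G : {group {perm T}}) r k m1 m2 :
  k \in CGstab G r -> m1 * m2^-1 \in G -> m1 r = m2 r -> k ^ m1 = k ^ m2.
Proof.
move=> /setIP[_ /centP kC] mG m12r.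
have m_stab : m1 * m2^-1 \in 'C_G[r | 'P].
  by rewrite inE mG; apply/astab1P; rewrite /= /aperm permM m12r permK.
rewrite -[m1](mulgKV m2) conjgM; congr (_ ^ _).
by rewrite /conjg (kC _ m_stab) mulKg.
Qed.

Section Representatives.
Variables (T : finType) (G : {group {perm T}}) (rep : T -> T) (g : T -> {perm T}).
Hypothesis rep_orbit : forall y, rep y \in orbit 'P G y.
Hypothesis rep_eq : forall y y', y' \in orbit 'P G y -> rep y' = rep y.
Hypothesis g_spec : forall y, g y \in G /\ g y (rep y) = y.

Local Notation R := (reps rep).

Lemma g_mem y : g y \in G. Proof. exact: (g_spec y).1. Qed.

Lemma g_rep y : g y (rep y) = y. Proof. exact: (g_spec y).2. Qed.

Lemma invg_g y : (g y)^-1 y = rep y.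
Proof. by have := permK (g y) (rep y); rewrite g_rep. Qed.

Lemma rep_act k y : k \in G -> rep (k y) = rep y.
Proof. by move=> kG; apply: rep_eq; apply/orbitP; exists k. Qed.

Lemma rep_idem y : rep (rep y) = rep y.
Proof. exact: rep_eq (rep_orbit y). Qed.

Lemma mem_reps x : (x \in R) = (rep x == x).
Proof.
apply/imsetP/eqP => [[y _ ->] | <-]; first exact: rep_idem.
by exists x.
Qed.

Lemma rep_in_reps y : rep y \in R.
Proof. by rewrite mem_reps rep_idem. Qed.

Lemma reps_rep x : x \in R -> rep x = x.
Proof. by rewrite mem_reps => /eqP. Qed.

Lemma rep_norm p y : p \in 'N(G) -> rep (p (rep y)) = rep (p y).
Proof.
move=> nGp; case/orbitP: (rep_orbit y) => k kG <-.
have -> : p (k y) = (k ^ p) (p y) by rewrite conjgE !permM permK.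
by rewrite rep_act // memJ_norm.
Qed.

Lemma CGstab_transport k y p : p \in 'N(G) ->
  k \in CGstab G (rep y) -> (k ^ g y) ^ p \in CGstab G (p y).
Proof.
move=> nGp kC; rewrite (CGstabJ _ nGp) memJ_conjg.
have nGg : g y \in 'N(G) by rewrite (subsetP (normG G)) ?g_mem.
by rewrite -[in CGstab G y](g_rep y) (CGstabJ _ nGg) memJ_conjg.
Qed.

Lemma foldersP (L : {ffun T -> {perm T}}) :
  reflect (forall x, if x \in R then L x \in CGstab G x else L x == 1)
          (L \in folders G rep).
Proof. by rewrite inE; apply: (iffP forallP). Qed.

Lemma fol_actE (L : {ffun T -> {perm T}}) p x : fol_act rep g L p x =
  if x \in R then (L (rep (p^-1 x)) ^ g (p^-1 x)) ^ p else 1.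
Proof. by rewrite ffunE /= invg_g. Qed.

Lemma fol_act_folders (L : {ffun T -> {perm T}}) p :
  L \in folders G rep -> p \in 'N(G) -> fol_act rep g L p \in folders G rep.
Proof.
move=> /foldersP LY nGp; apply/foldersP => x; rewrite fol_actE.
case: (x \in R) => //.
have := LY (rep (p^-1 x)); rewrite rep_in_reps => /(CGstab_transport nGp).
by rewrite permKV.
Qed.

Lemma fol_act1 (L : {ffun T -> {perm T}}) :
  L \in folders G rep -> fol_act rep g L 1 = L.
Proof.
move=> /foldersP LY; apply/ffunP => x; rewrite fol_actE invg1 perm1 conjg1.
have := LY x; case: (boolP (x \in R)) => [xR | _ /eqP -> //].
rewrite reps_rep // => Lx.
rewrite (CGstab_conj_eq (m2 := 1) Lx) ?conjg1 ?invg1 ?mulg1 ?g_mem ?perm1 //.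
by have := g_rep x; rewrite reps_rep.
Qed.

Lemma fol_actM (L : {ffun T -> {perm T}}) a b :
  L \in folders G rep -> a \in 'N(G) -> b \in 'N(G) ->
  fol_act rep g L (a * b) = fol_act rep g (fol_act rep g L a) b.
Proof.
move=> /foldersP LY nGa nGb; apply/ffunP => w; rewrite !fol_actE.
case: (w \in R) => //; rewrite rep_in_reps invMg permM.
set u := b^-1 w; set y := a^-1 u; set v := a^-1 (rep u).
have rv : rep v = rep y by rewrite /v /y rep_norm ?groupV.
have := LY (rep y); rewrite rep_in_reps rv -!conjgM => Ly.
apply: (CGstab_conj_eq Ly).
  rewrite !invMg !mulgA mulgK.
  have -> : g y * a * (g u)^-1 * a^-1 = g y * ((g u)^-1 ^ a^-1).
    by rewrite conjgE invgK !mulgA.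
  by rewrite groupM ?groupV ?g_mem // groupM ?g_mem // memJ_norm ?groupV ?g_mem.
by rewrite !permM g_rep -rv g_rep /v /y !permKV g_rep /u permKV.
Qed.

Lemma fol_actK (L : {ffun T -> {perm T}}) a :
  L \in folders G rep -> a \in 'N(G) -> fol_act rep g (fol_act rep g L a) a^-1 = L.
Proof. by move=> LY nGa; rewrite -fol_actM ?groupV // mulgV fol_act1. Qed.

(* N(G) acts on folders only; extending by the identity elsewhere gives an
   action on the whole type, as [Frobenius_Cauchy] requires. *)
Definition folders_act (L : {ffun T -> {perm T}}) (a : {perm T}) :=
  if (L \in folders G rep) && (a \in 'N(G)) then fol_act rep g L a else L.

Lemma folders_act_is_action : is_action 'N(G) folders_act.
Proof.
split=> [a L1 L2 | L a b nGa nGb]; rewrite /folders_act.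
  case: (boolP (a \in 'N(G))) => [nGa | _]; rewrite ?andbT ?andbF //.
  case: (boolP (L1 \in _)) => Y1; case: (boolP (L2 \in _)) => Y2 // eqL.
  - by rewrite -(fol_actK Y1 nGa) eqL fol_actK.
  - by case/negP: Y2; rewrite -eqL fol_act_folders.
  - by case/negP: Y1; rewrite eqL fol_act_folders.
rewrite nGa nGb groupM // !andbT.
case: (boolP (L \in _)) => LY; last by rewrite (negbTE LY).
by rewrite fol_act_folders //= fol_actM.
Qed.

Definition folders_action := Action folders_act_is_action.

Lemma acts_folders : [acts 'N(G), on folders G rep | folders_action].
Proof.
apply/subsetP => a nGa; rewrite inE nGa inE /=; apply/subsetP => L LY.
by rewrite inE /= /folders_act LY nGa fol_act_folders.
Qed.

Lemma Fix_folders a :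
  a \in 'N(G) -> 'Fix_(folders G rep | folders_action)[a] = fol_fix G rep g a.
Proof.
move=> nGa; apply/setP => L; rewrite in_setI [RHS]inE.
by case LY: (L \in _) => //=; rewrite inE sub1set inE /= /folders_act LY nGa.
Qed.

Lemma orbits_folders :
  [set orbit folders_action 'N(G) L | L in folders G rep] = fol_orbits G rep g.
Proof.
apply: eq_in_imset => L LY; apply: eq_in_imset => a nGa.
by rewrite /= /folders_act LY nGa.
Qed.

Lemma sum_card_fol_fix :
  \sum_(f in 'N(G)) #|fol_fix G rep g f| = (#|fol_orbits G rep g| * #|'N(G)|)%N.
Proof.
rewrite -orbits_folders -(Frobenius_Cauchy acts_folders).
by apply: eq_bigr => a nGa; rewrite Fix_folders.
Qed.

Section FixedFolders.
Variables (f : {perm T}) (C : {set T}).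
Hypotheses (nGf : f \in 'N(G)) (hC : cycle_reps rep f C).

Local Notation fb := (fbar rep f).
Local Notation V := (T * {perm T})%type.
Local Notation GV := (gvert G rep).

Lemma fbar_preim u : u \in R -> rep (f^-1 (fb u)) = u.
Proof. by move=> uR; rewrite /fbar rep_norm ?groupV // permK reps_rep. Qed.

Lemma fbar_rep_preim w : w \in R -> fb (rep (f^-1 w)) = w.
Proof. by move=> wR; rewrite /fbar rep_norm // permKV reps_rep. Qed.

Lemma fbar_inj : {in R &, injective fb}.
Proof. by move=> u w uR wR e; rewrite -(fbar_preim uR) -(fbar_preim wR) e. Qed.

Lemma fcyc_reps x w : x \in R -> w \in fcyc rep f x -> w \in R.
Proof.
by rewrite inE => xR /iter_findex <-; case: findex => //= n; apply: rep_in_reps.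
Qed.

Lemma fcyc_sym x w : x \in R -> w \in fcyc rep f x -> x \in fcyc rep f w.
Proof.
move=> xR xw; have wR := fcyc_reps xR xw; move: xw; rewrite !inE.
by rewrite (fconnect_sym_in (fun y _ => rep_in_reps (f y)) fbar_inj).
Qed.

(* Being the identity off the vertex set keeps [gsucc] injective. *)
Definition gsucc (v : V) : V :=
  if v \in GV then (fb v.1, (v.2 ^ g (f^-1 (fb v.1))) ^ f) else v.

Lemma gvertE (v : V) : (v \in GV) = (v.1 \in R) && (v.2 \in CGstab G v.1).
Proof. by rewrite inE. Qed.

Lemma gsucc1 v : v \in GV -> (gsucc v).1 = fb v.1.
Proof. by rewrite /gsucc => ->. Qed.

Lemma gsucc_gvert v : (gsucc v \in GV) = (v \in GV).
Proof.
rewrite /gsucc; case: ifP => // /[dup] vG; rewrite !gvertE rep_in_reps => /andP[vR vC].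
apply/idP; have := CGstab_transport (y := f^-1 (fb v.1)) nGf.
by rewrite fbar_preim // permKV; apply.
Qed.

Lemma gsucc_inj : injective gsucc.
Proof.
have gsuccK u w : u \in GV -> w \in GV -> gsucc u = gsucc w -> u = w.
  move=> uG wG; rewrite /gsucc uG wG; case: u w uG wG => [u1 u2] [w1 w2].
  rewrite !gvertE /= => /andP[u1R _] /andP[w1R _] [/(fbar_inj u1R w1R) e1].
  by rewrite e1 => /conjg_inj /conjg_inj ->.
move=> u w; case: (boolP (u \in GV)) => uG; case: (boolP (w \in GV)) => wG.
- exact: gsuccK.
- by move=> e; move: wG; rewrite -gsucc_gvert -e gsucc_gvert uG.
- by move=> e; move: uG; rewrite -gsucc_gvert e gsucc_gvert wG.
- by rewrite /gsucc (negbTE uG) (negbTE wG).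
Qed.

Lemma iter_gsucc1 v n : v \in GV -> (iter n gsucc v).1 = iter n fb v.1.
Proof.
move=> vG; have iterG m : iter m gsucc v \in GV by elim: m => //= m; rewrite gsucc_gvert.
by elim: n => //= n IH; rewrite gsucc1 ?IH.
Qed.

Lemma gedgeE : gedge G rep g f =2 frel_in gsucc GV.
Proof.
move=> u v; rewrite /gedge /frel_in; case: (boolP (u \in GV)) => //= uG.
have uR : u.1 \in R by move: uG; rewrite gvertE => /andP[].
rewrite invg_g; apply/idP/eqP => [/andP[vG /andP[/eqP e1 /eqP e2]] | ->].
  have ev1 : v.1 = fb u.1.
    by rewrite e1 fbar_rep_preim //; move: vG; rewrite gvertE => /andP[].
  by rewrite /gsucc uG [v]surjective_pairing e2 ev1.
by rewrite gsucc_gvert uG gsucc1 // fbar_preim // /gsucc uG !eqxx.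
Qed.

Lemma is_dcycle_gedge A : is_dcycle (gedge G rep g f) A <->
  exists2 v, v \in GV & A = frel_edges gsucc (forbit gsucc v).
Proof.
rewrite -(is_dcycle_frel_in gsucc_inj gsucc_gvert).
by split=> -[s [s0 us cs ->]]; exists s; rewrite ?(eq_cycle gedgeE) in cs *.
Qed.

Lemma folder_gvert (L : {ffun T -> {perm T}}) u :
  L \in folders G rep -> u \in R -> (u, L u) \in GV.
Proof. by move=> /foldersP LY uR; rewrite gvertE /= uR; have := LY u; rewrite uR. Qed.

Lemma mem_fol_fix (L : {ffun T -> {perm T}}) : L \in fol_fix G rep g f <->
  L \in folders G rep /\ forall u, u \in R -> gsucc (u, L u) = (fb u, L (fb u)).
Proof.
split=> [| [LY fixL]].
  rewrite inE => /andP[LY /eqP fixL]; split=> // u uR.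
  have := congr1 (fun M : {ffun T -> {perm T}} => M (fb u)) fixL.
  by rewrite fol_actE rep_in_reps fbar_preim // /gsucc folder_gvert // => <-.
rewrite inE LY; apply/eqP/ffunP => w; rewrite fol_actE.
case: (boolP (w \in R)) => wR; last by move/foldersP: LY => /(_ w); rewrite (negbTE wR) => /eqP.
have := fixL _ (rep_in_reps (f^-1 w)).
by rewrite /gsucc folder_gvert ?rep_in_reps //= fbar_rep_preim // => -[].
Qed.

Lemma iter_gsucc_fix (L : {ffun T -> {perm T}}) u n :
  L \in fol_fix G rep g f -> u \in R ->
  iter n gsucc (u, L u) = (iter n fb u, L (iter n fb u)).
Proof.
case/mem_fol_fix => _ fixL uR; elim: n => //= n ->.
by rewrite fixL //; case: n => //= n; apply: rep_in_reps.
Qed.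

Lemma forbit_fix (L : {ffun T -> {perm T}}) x :
  L \in fol_fix G rep g f -> x \in R ->
  forbit gsucc (x, L x) = [set (w, L w) | w in fcyc rep f x].
Proof.
move=> Lfix xR; apply/setP => v; rewrite inE; apply/idP/imsetP => [xv | [w]].
  exists (iter (findex gsucc (x, L x) v) fb x); first by rewrite inE fconnect_iter.
  by rewrite -iter_gsucc_fix // iter_findex.
by rewrite inE => /iter_findex <- ->; rewrite -iter_gsucc_fix // fconnect_iter.
Qed.

Definition fix_cycles (L : {ffun T -> {perm T}}) : {ffun T -> {set V * V}} :=
  [ffun x => if x \in C then frel_edges gsucc (forbit gsucc (x, L x)) else set0].

Lemma cycle_reps_reps x : x \in C -> x \in R.
Proof. by case: hC => /subsetP sCR _; apply: sCR. Qed.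

Lemma cycle_reps_exists w : w \in R -> exists2 x, x \in C & w \in fcyc rep f x.
Proof.
move=> wR; case: hC => _ /(_ w wR) /eqP /cards1P [x Ex].
have : x \in [set x in C | fconnect fb x w] by rewrite Ex set11.
by rewrite !inE => /andP[xC xw]; exists x; rewrite ?inE.
Qed.

Lemma cycle_reps_uniq w x x' : w \in R -> x \in C -> x' \in C ->
  w \in fcyc rep f x -> w \in fcyc rep f x' -> x = x'.
Proof.
move=> wR xC x'C; rewrite !inE => xw x'w.
case: hC => _ /(_ w wR) /eqP /cards1P [x0 Ex].
have : x \in [set x in C | fconnect fb x w] by rewrite inE xC.
have : x' \in [set x in C | fconnect fb x w] by rewrite inE x'C.
by rewrite Ex !inE => /eqP -> /eqP ->.
Qed.

Lemma fix_cyclesE (L : {ffun T -> {perm T}}) x :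
  L \in fol_fix G rep g f -> x \in C ->
  fix_cycles L x = frel_edges gsucc [set (w, L w) | w in fcyc rep f x].
Proof. by move=> Lfix xC; rewrite ffunE xC forbit_fix // cycle_reps_reps. Qed.

Lemma fix_cycles_tuple L :
  L \in fol_fix G rep g f -> fix_cycles L \in cycle_tuples G rep g f C.
Proof.
move=> Lfix; case/mem_fol_fix: (Lfix) => LY _.
rewrite inE; apply/forallP => x; rewrite ffunE.
case: (boolP (x \in C)) => // xC; have xR := cycle_reps_reps xC.
rewrite inE; apply/and3P; split.
- by apply/boolp.asboolP/is_dcycle_gedge; exists (x, L x); rewrite ?folder_gvert.
- rewrite /dc_short dcverts_frel_edges forbit_fix //; apply/forallP => t; apply/card_le1_eqP.
  by move=> _ _ /setIdP[/imsetP[v _ ->] /eqP/= ->] /setIdP[/imsetP[w _ ->] /eqP/= ->].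
- rewrite dcverts_frel_edges forbit_fix //.
  by apply/subsetP => _ /imsetP[w xw ->]; rewrite inE.
Qed.

Lemma fix_cycles_inj : {in fol_fix G rep g f &, injective fix_cycles}.
Proof.
move=> L1 L2 fix1 fix2 eqL; apply/ffunP => w.
case/mem_fol_fix: (fix1) => /foldersP Y1 _; case/mem_fol_fix: (fix2) => /foldersP Y2 _.
case: (boolP (w \in R)) => wR; last first.
  by have := Y1 w; have := Y2 w; rewrite (negbTE wR) => /eqP -> /eqP ->.
have [x xC xw] := cycle_reps_exists wR.
have := congr1 (fun c : {ffun T -> {set V * V}} => dcverts (c x)) eqL.
rewrite /= !fix_cyclesE // !dcverts_frel_edges => eqS.
have : (w, L1 w) \in [set (w, L2 w) | w in fcyc rep f x] by rewrite -eqS imset_f.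
by case/imsetP => w' _ [-> ->].
Qed.

Section TupleFolder.
Variable c : {ffun T -> {set V * V}}.
Hypothesis c_tuple : c \in cycle_tuples G rep g f C.

Local Notation S x := (dcverts (c x)).

Lemma cycle_tuple_spec x : x \in C ->
  [/\ exists2 v, v \in GV & S x = forbit gsucc v,
      c x = frel_edges gsucc (S x),
      {in S x &, forall v w, v.1 = w.1 -> v = w} &
      {subset S x <= [pred v | v.1 \in fcyc rep f x]}].
Proof.
move=> xC; move: c_tuple; rewrite inE => /forallP /(_ x); rewrite xC inE.
case/and3P => /boolp.asboolP /is_dcycle_gedge [v vG ->].
rewrite /dc_short dcverts_frel_edges => /forallP short /subsetP sub.
split=> //; first by exists v.
  by move=> u w uS wS e; apply: (card_le1_eqP (short u.1)); apply/setIdP; rewrite ?e.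
by move=> u /sub; rewrite inE.
Qed.

Lemma cycle_tuple_gvert x v : x \in C -> v \in S x -> v \in GV.
Proof.
move=> xC; have [[v0 v0G ->] _ _ _] := cycle_tuple_spec xC.
exact/subsetP/(forbit_sub gsucc_gvert v0G).
Qed.

Definition tuple_folder : {ffun T -> {perm T}} :=
  [ffun w => if w \in R then
     if [pick v in \bigcup_(x in C) S x | v.1 == w] is Some v then v.2 else 1
   else 1].

Lemma tuple_folder_vert x v : x \in C -> v \in S x -> tuple_folder v.1 = v.2.
Proof.
move=> xC vS; have [_ _ shortS subS] := cycle_tuple_spec xC.
have vR : v.1 \in R by move: (cycle_tuple_gvert xC vS); rewrite gvertE => /andP[].
rewrite ffunE vR; case: pickP => [v' /andP[/bigcupP[x' x'C v'S] /eqP e1] | /(_ v)].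
  have [_ _ _ subS'] := cycle_tuple_spec x'C.
  have ex : x' = x.
    by apply: (cycle_reps_uniq vR x'C xC); [rewrite -e1; apply: subS' | apply: subS].
  by rewrite ex in v'S; rewrite (shortS v' v).
by rewrite eqxx andbT => /negP[]; apply/bigcupP; exists x.
Qed.

Lemma tuple_folder_cycle x :
  x \in C -> S x = [set (w, tuple_folder w) | w in fcyc rep f x].
Proof.
move=> xC; have [[v0 v0G Sx] _ _ subS] := cycle_tuple_spec xC.
apply/setP => v; apply/idP/imsetP => [vS | [w xw ->]].
  by exists v.1; [apply: subS | rewrite (tuple_folder_vert xC vS) -surjective_pairing].
have v0S : v0 \in S x by rewrite Sx forbit_refl.
have v0w : fconnect fb v0.1 w.
  apply: connect_trans (_ : fconnect fb x w); last by rewrite inE in xw.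
  by have := fcyc_sym (cycle_reps_reps xC) (subS _ v0S); rewrite inE.
set u := iter (findex fb v0.1 w) gsucc v0.
have uS : u \in S x by rewrite Sx inE fconnect_iter.
have u1 : u.1 = w by rewrite iter_gsucc1 // iter_findex.
by rewrite -u1 (tuple_folder_vert xC uS) -surjective_pairing.
Qed.

Lemma tuple_folder_fix : tuple_folder \in fol_fix G rep g f.
Proof.
apply/mem_fol_fix; split.
  apply/foldersP => w; case: (boolP (w \in R)) => wR; last by rewrite ffunE (negbTE wR).
  have [x xC xw] := cycle_reps_exists wR.
  have : (w, tuple_folder w) \in GV.
    by apply: (cycle_tuple_gvert xC); rewrite tuple_folder_cycle // imset_f.
  by rewrite gvertE => /andP[].
move=> u uR; have [x xC xu] := cycle_reps_exists uR.
have [[v0 v0G Sx] _ _ _] := cycle_tuple_spec xC.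
have uS : (u, tuple_folder u) \in S x by rewrite tuple_folder_cycle // imset_f.
have uG := cycle_tuple_gvert xC uS.
have : gsucc (u, tuple_folder u) \in S x by rewrite Sx forbit_succ // -Sx.
rewrite tuple_folder_cycle // => /imsetP[w _ e].
by move: (gsucc1 uG); rewrite e /= => ->.
Qed.

Lemma fix_cycles_tuple_folder : fix_cycles tuple_folder = c.
Proof.
apply/ffunP => x; rewrite ffunE; case: (boolP (x \in C)) => xC; last first.
  by move: c_tuple; rewrite inE => /forallP /(_ x); rewrite (negbTE xC) => /eqP ->.
have [[v0 v0G Sx] cx _ _] := cycle_tuple_spec xC.
have xS : (x, tuple_folder x) \in forbit gsucc v0.
  by rewrite -Sx tuple_folder_cycle // imset_f // inE connect0.
by rewrite cx Sx (forbit_eq gsucc_inj xS).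
Qed.

End TupleFolder.

Lemma fix_cycles_onto : fix_cycles @: fol_fix G rep g f = cycle_tuples G rep g f C.
Proof.
apply/setP => c; apply/imsetP/idP => [[L Lfix ->] | c_tuple].
  exact: fix_cycles_tuple.
by exists (tuple_folder c); rewrite ?tuple_folder_fix ?fix_cycles_tuple_folder.
Qed.

Lemma card_cycle_tuples :
  #|cycle_tuples G rep g f C| = (\prod_(x in C) gamma_r G rep g f x)%N.
Proof.
have -> : cycle_tuples G rep g f C = [set c in pfamily set0 C (short_cycles G rep g f)].
  apply/setP => c; rewrite !inE; apply: eq_forallb => x.
  by rewrite /finfun.fmem /=; case: (x \in C); rewrite inE.
by rewrite cardsE card_pfamily foldrE big_image.
Qed.

Lemma card_fol_fix : #|fol_fix G rep g f| = (\prod_(x in C) gamma_r G rep g f x)%N.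
Proof.
by rewrite -card_cycle_tuples -fix_cycles_onto card_in_imset //; apply: fix_cycles_inj.
Qed.

End FixedFolders.

End Representatives.

Theorem theorem5p4 (T : finType) (G : {group {perm T}})
  (rep : T -> T) (g : T -> {perm T}) (Cyc : {perm T} -> {set T})
  (hrep_orb : forall y, rep y \in orbit 'P G y)
  (hrep_eq : forall y y', y' \in orbit 'P G y -> rep y' = rep y)
  (hg : forall y, g y \in G /\ g y (rep y) = y)
  (hCyc : forall f, f \in 'N(G) -> cycle_reps rep f (Cyc f)) :
  (forall f, f \in 'N(G) ->
     exists h : {ffun T -> {perm T}} ->
                {ffun T -> {set (T * {perm T}) * (T * {perm T})}},
       {in fol_fix G rep g f &, injective h} /\
       h @: fol_fix G rep g f = cycle_tuples G rep g f (Cyc f)) /\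
  (((#|fol_orbits G rep g|)%:R : rat)
     = ((\sum_(f in 'N(G)) #|fol_fix G rep g f|)%:R : rat) / (#|'N(G)|)%:R)%R /\
  \sum_(f in 'N(G)) #|fol_fix G rep g f|
     = \sum_(f in 'N(G)) \prod_(x in Cyc f) gamma_r G rep g f x.
Proof.
have inj := fix_cycles_inj hrep_orb hrep_eq hg.
have onto := fix_cycles_onto hrep_orb hrep_eq hg.
split; [|split].
- move=> f nGf; exists (fix_cycles G rep g f (Cyc f)).
  by split; [apply: inj nGf (hCyc f nGf) | apply: onto nGf (hCyc f nGf)].
- rewrite (sum_card_fol_fix hrep_orb hrep_eq hg) GRing.natrM GRing.mulfK //.
  by rewrite Num.Theory.pnatr_eq0 -lt0n cardG_gt0.
- apply: eq_bigr => f nGf.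
  by rewrite (card_fol_fix hrep_orb hrep_eq hg nGf (hCyc f nGf)).
Qed.
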